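(* Let $\mathcal{A}$ be the free associative $\mathbb{C}$-algebra on two noncommuting generators $L$ and $R$, let $S=\{FG-GF : F,G \text{ nonempty balanced words}\}$, and let $\mathcal{J}$ be the two-sided ideal of $\mathcal{A}$ generated by $S$. Let $\Upsilon$ be the set of equivalence classes (under $\sim$) of upper primes and $\Lambda$ the set of equivalence classes of lower primes. For each $\upsilon\in\Upsilon$ choose an arbitrary representative $U_\upsilon\in\upsilon$, and for each $\lambda\in\Lambda$ choose an arbitrary representative $D_\lambda\in\lambda$. Define $$S'''=\{U_\upsilon D_\lambda-D_\lambda U_\upsilon : \upsilon\in\Upsilon,\ \lambda\in\Lambda\}.$$ Then $S'''\subseteq S$, $S'''$ generates $\mathcal{J}$ as a two-sided ideal, and no proper subset of $S'''$ generates $\mathcal{J}$.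
   Context: Words are finite products of the letters $L,R$ (the empty word is allowed and is the identity); the words form a $\mathbb{C}$-basis of $\mathcal{A}$. A word is balanced if it contains equally many $L$'s and $R$'s. For words $X,Y$ write $X\sim Y$ if $X-Y\in\mathcal{J}$; this is an equivalence relation on words. A word is prime if it is nonempty, balanced, and cannot be written as a product of two nonempty balanced words. For a balanced word $W=a_1\cdots a_n$ and $0\le k\le n$, its $k$-th elevation is $e_k(W)=\sum_{i=1}^k \overline{a_i}$, where $\overline{R}=1$, $\overline{L}=-1$. A prime word $P$ is an upper prime if $e_k(P)>0$ for all $1\le k\le l(P)-1$, and a lower prime if $e_k(P)<0$ for all $1\le k\le l(P)-1$ (every prime is exactly one of these), where $l(P)$ is the length of $P$. *)

From mathcomp Require Import all_boot all_algebra.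
From mathcomp Require Import complex.
From mathcomp Require Import Rstruct.
Set Implicit Arguments.
Unset Strict Implicit.
Unset Printing Implicit Defensive.
Import GRing.Theory Num.Theory.
Local Open Scope ring_scope.

Definition C : fieldType := complex Rdefinitions.R.

Definition word := seq bool.
Definition letR : bool := true.
Definition letL : bool := false.

(* Elements of the free algebra A = C<L,R> are represented by their
   coefficient functions on the word basis (finitely supported). *)
Definition alg := word -> C.

Definition finsupp (f : alg) : Prop :=
  exists s : seq word, forall w, w \notin s -> f w = 0.

Definition wrd (v : word) : alg := fun w => (w == v)%:R.

Definition alg_add (f g : alg) : alg := fun w => f w + g w.
Definition alg_sub (f g : alg) : alg := fun w => f w - g w.
(* product: concatenation of words extended bilinearly *)
Definition alg_mul (f g : alg) : alg :=
  fun w => \sum_(i < (size w).+1) f (take i w) * g (drop i w).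

Definition comm (f g : alg) : alg := alg_sub (alg_mul f g) (alg_mul g f).

Definition ideal_gen (T : alg -> Prop) (f : alg) : Prop :=
  exists (n : nat) (a t b : nat -> alg),
    (forall i, (i < n)%N -> [/\ finsupp (a i), T (t i) & finsupp (b i)]) /\
    f = (fun w => \sum_(i < n) alg_mul (alg_mul (a i) (t i)) (b i) w).

Definition balanced (w : word) : bool := count_mem letR w == count_mem letL w.

Definition S_set (x : alg) : Prop :=
  exists F G : word, [/\ F != [::], G != [::], balanced F, balanced G &
                         x = comm (wrd F) (wrd G)].

Definition J (f : alg) : Prop := ideal_gen S_set f.

Definition wequiv (X Y : word) : Prop := J (alg_sub (wrd X) (wrd Y)).

Definition prime_word (P : word) : Prop :=
  [/\ P != [::], balanced P &
      ~ exists F G : word, [/\ F != [::], G != [::], balanced F, balanced G &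
                              P = F ++ G]].

Definition elev (W : word) (k : nat) : int :=
  (count_mem letR (take k W))%:Z - (count_mem letL (take k W))%:Z.

Definition upper_prime (P : word) : Prop :=
  prime_word P /\ forall k, (1 <= k <= (size P).-1)%N -> 0 < elev P k.

Definition lower_prime (P : word) : Prop :=
  prime_word P /\ forall k, (1 <= k <= (size P).-1)%N -> elev P k < 0.

(* A choice of one representative in each ~-class of upper primes
   (resp. lower primes), given as a function constant on classes. *)
Definition rep_choice (isp : word -> Prop) (U : word -> word) : Prop :=
  (forall P, isp P -> isp (U P) /\ wequiv (U P) P) /\
  (forall P Q, isp P -> isp Q -> wequiv P Q -> U P = U Q).

Definition S3 (U D : word -> word) (x : alg) : Prop :=
  exists P Q, [/\ upper_prime P, lower_prime Q & x = comm (wrd (U P)) (wrd (D Q))].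

From mathcomp Require Import all_boot all_order all_algebra.
From mathcomp Require Import zify boolp.
Set Implicit Arguments.
Unset Strict Implicit.
Unset Printing Implicit Defensive.
Import Order.TTheory GRing.Theory Num.Theory.
Local Open Scope ring_scope.

(* Every generator FG - GF of J lies in the ideal generated by
   S''', by induction on |FG|.  A factor that splits into balanced words is
   handled piece by piece.  Two upper primes R F' L and R G' L commute once the
   balanced block LR is moved across F' and G', and likewise for two lower
   primes.  An upper prime F and a lower prime G are first replaced by their
   representatives U_F and D_G: F - U_F lies in J, and two words of length n
   that are congruent modulo J are already congruent modulo the commutators of
   total size at most n, which the induction hypothesis provides.

   Both this step and minimality rest on one observation: if a class K of words
   of length n is preserved by every swap x F G y <-> x G F y coming from the
   generators FG - GF of an ideal, then the linear form summing the coefficients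
   over K vanishes on that ideal, so congruent words are both in K or both out.

   If T misses U_0 D_0 - D_0 U_0, take for K the words X Y with X
   an upper prime congruent to U_0 and Y a lower prime congruent to D_0.  A swap
   inside X or inside Y preserves K, and a balanced block meeting both X and Y
   is all of X Y; so the swaps of T preserve K.  But U_0 D_0 lies in K and
   D_0 U_0 does not, while their difference would lie in the ideal of T. *)

(** * Products of words and generated ideals *)

Lemma wrd_mul (u v : word) : alg_mul (wrd u) (wrd v) = wrd (u ++ v).
Proof.
apply/funext => w; rewrite /alg_mul /wrd.
have split_at (i : 'I_(size w).+1) : (take i w == u)%:R * (drop i w == v)%:R =
    if i == size u :> nat then (w == u ++ v)%:R else 0 :> C.
  have [-> /=|ne_iu] := eqVneq (i : nat) (size u).
    have [->|ne_w] := eqVneq w (u ++ v).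
      by rewrite take_size_cat // drop_size_cat // !eqxx mulr1.
    have [take_u|] := eqVneq (take (size u) w) u; last by rewrite mul0r.
    have [drop_v|] := eqVneq (drop (size u) w) v; last by rewrite mulr0.
    by move: ne_w; rewrite -take_u -drop_v cat_take_drop eqxx.
  have [take_u|] := eqVneq (take i w) u; last by rewrite mul0r.
  by move: ne_iu; rewrite -take_u size_take_min (minn_idPl _) ?eqxx // -ltnS.
rewrite (eq_bigr _ (fun i _ => split_at i)) -big_mkcond.
rewrite (big_ord1_eq _ (fun=> (w == u ++ v)%:R)) ltnS.
by case: eqP => [->|]; rewrite ?size_cat ?leq_addr //; case: leqP.
Qed.

Definition alg_scale (c : C) (f : alg) : alg := fun w => c * f w.

Lemma alg_mulBl (f g h : alg) :
  alg_mul (alg_sub f g) h = alg_sub (alg_mul f h) (alg_mul g h).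
Proof.
apply/funext => w; rewrite /alg_mul /alg_sub -sumrB.
by apply: eq_bigr => i _; rewrite mulrBl.
Qed.

Lemma alg_mulBr (f g h : alg) :
  alg_mul h (alg_sub f g) = alg_sub (alg_mul h f) (alg_mul h g).
Proof.
apply/funext => w; rewrite /alg_mul /alg_sub -sumrB.
by apply: eq_bigr => i _; rewrite mulrBr.
Qed.

Lemma comm_wrd (F G : word) :
  comm (wrd F) (wrd G) = alg_sub (wrd (F ++ G)) (wrd (G ++ F)).
Proof. by rewrite /comm !wrd_mul. Qed.

Definition sandwich (x : word) (t : alg) (y : word) : alg :=
  alg_mul (alg_mul (wrd x) t) (wrd y).

Lemma sandwich_comm_wrd (x F G y : word) :
  sandwich x (comm (wrd F) (wrd G)) y =
  alg_sub (wrd (x ++ F ++ G ++ y)) (wrd (x ++ G ++ F ++ y)).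
Proof. by rewrite comm_wrd /sandwich alg_mulBr alg_mulBl !wrd_mul -!catA. Qed.

Lemma alg_mul_scalel (c : C) (f g : alg) :
  alg_mul (alg_scale c f) g = alg_scale c (alg_mul f g).
Proof.
apply/funext => w; rewrite /alg_mul /alg_scale mulr_sumr.
by apply: eq_bigr => i _; rewrite mulrA.
Qed.

Definition combination (s : seq word) (c : word -> C) (g : word -> alg) : alg :=
  fun w => \sum_(x <- s) c x * g x w.

Lemma finsupp_combination (a : alg) : finsupp a -> exists s, a = combination s a wrd.
Proof.
case=> s a_supp; exists (undup s); apply/funext => w; rewrite /combination /wrd.
have [w_s|w_notin] := boolP (w \in undup s); last first.
  rewrite a_supp -1?mem_undup // big1_seq // => x /andP[_ x_s].
  by have [wx|_] := eqVneq w x; [rewrite wx x_s in w_notin | rewrite mulr0].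
rewrite (bigD1_seq w) ?undup_uniq //= eqxx mulr1 (@big1 C 0 +%R) ?addr0 // => x ne_xw.
by rewrite eq_sym (negbTE ne_xw) mulr0.
Qed.

Lemma alg_mul_combinationl s c g h :
  alg_mul (combination s c g) h = combination s c (fun x => alg_mul (g x) h).
Proof.
apply/funext => w; rewrite /alg_mul /combination.
under eq_bigr => i _ do rewrite mulr_suml.
rewrite exchange_big /=; apply: eq_bigr => x _.
by rewrite mulr_sumr; apply: eq_bigr => i _; rewrite mulrA.
Qed.

Lemma alg_mul_combinationr s c g h :
  alg_mul h (combination s c g) = combination s c (fun x => alg_mul h (g x)).
Proof.
apply/funext => w; rewrite /alg_mul /combination.
under eq_bigr => i _ do rewrite mulr_sumr.
rewrite exchange_big /=; apply: eq_bigr => x _.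
by rewrite mulr_sumr; apply: eq_bigr => i _; rewrite mulrCA.
Qed.

Lemma finsupp_wrd (u : word) : finsupp (wrd u).
Proof. by exists [:: u] => w; rewrite inE /wrd => /negbTE->. Qed.

Lemma alg_mul_combination sa ca sb cb t :
  alg_mul (alg_mul (combination sa ca wrd) t) (combination sb cb wrd) =
  combination sa ca (fun x => combination sb cb (fun y => sandwich x t y)).
Proof.
rewrite !alg_mul_combinationl; congr combination; apply/funext => x.
by rewrite alg_mul_combinationr.
Qed.

Section IdealGen.
Variable T : alg -> Prop.

Lemma ideal_gen0 : ideal_gen T (fun=> 0).
Proof.
exists 0%N, (fun=> wrd [::]), (fun=> wrd [::]), (fun=> wrd [::]).
by split => //; apply/funext => w; rewrite big_ord0.
Qed.

Lemma ideal_genD f g : ideal_gen T f -> ideal_gen T g -> ideal_gen T (alg_add f g).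
Proof.
move=> [n1 [a1 [t1 [b1 [gen1 ->]]]]] [n2 [a2 [t2 [b2 [gen2 ->]]]]].
pose glue (X Y : nat -> alg) i := if (i < n1)%N then X i else Y (i - n1)%N.
exists (n1 + n2)%N, (glue a1 a2), (glue t1 t2), (glue b1 b2); split.
  move=> i lt_i; rewrite /glue; case: ifP => [|/negbT]; first exact: gen1.
  by rewrite -leqNgt => le_n1i; apply: gen2; rewrite ltn_subLR.
apply/funext => w; rewrite /alg_add big_split_ord /glue /=.
f_equal; apply: eq_bigr => i _; first by rewrite ltn_ord.
by rewrite ltnNge leq_addr addKn.
Qed.

Lemma ideal_genZ c f : ideal_gen T f -> ideal_gen T (alg_scale c f).
Proof.
move=> [n [a [t [b [gen ->]]]]].
exists n, (fun i => alg_scale c (a i)), t, b; split.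
  move=> i lt_i; have [[s a_supp] Tt b_fin] := gen i lt_i; split => //.
  by exists s => w /a_supp; rewrite /alg_scale => ->; rewrite mulr0.
apply/funext => w; rewrite /alg_scale mulr_sumr; apply: eq_bigr => i _.
by rewrite !alg_mul_scalel.
Qed.

Lemma ideal_gen_sandwich x t y : T t -> ideal_gen T (sandwich x t y).
Proof.
move=> Tt; exists 1%N, (fun=> wrd x), (fun=> t), (fun=> wrd y); split.
  by move=> i _; split => //; apply: finsupp_wrd.
by apply/funext => w; rewrite big_ord1.
Qed.

Lemma ideal_gen_ind (P : alg -> Prop) :
  P (fun=> 0) -> (forall f g, P f -> P g -> P (alg_add f g)) ->
  (forall c f, P f -> P (alg_scale c f)) ->
  (forall x t y, T t -> P (sandwich x t y)) ->
  forall f, ideal_gen T f -> P f.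
Proof.
move=> P0 PD PZ Psandwich f [n [a [t [b [gen ->]]]]].
have Psum (I : Type) (r : seq I) (F : I -> alg) :
    (forall i, P (F i)) -> P (fun w => \sum_(i <- r) F i w).
  move=> PF; elim: r => [|i r IHr].
    by congr P: P0; apply/funext => w; rewrite big_nil.
  by congr P: (PD _ _ (PF i) IHr); apply/funext => w; rewrite big_cons.
have Pcomb s c g : (forall x, P (g x)) -> P (combination s c g).
  by move=> Pg; apply: (Psum _ s (fun x => alg_scale (c x) (g x))) => x; apply: PZ.
apply: Psum => i; have [a_fin Tt b_fin] := gen i (ltn_ord i).
have [sa ->] := finsupp_combination a_fin; have [sb ->] := finsupp_combination b_fin.
by rewrite alg_mul_combination; do 2!apply: (Pcomb) => ?; apply: Psandwich.
Qed.

End IdealGen.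

Lemma ideal_gen_sub (T T' : alg -> Prop) :
  (forall x t y, T t -> ideal_gen T' (sandwich x t y)) ->
  forall f, ideal_gen T f -> ideal_gen T' f.
Proof.
move=> sandwich_T'; apply: ideal_gen_ind sandwich_T'.
- exact: ideal_gen0.
- exact: ideal_genD.
- exact: ideal_genZ.
Qed.

Lemma ideal_gen_mono (T T' : alg -> Prop) :
  (forall t, T t -> T' t) -> forall f, ideal_gen T f -> ideal_gen T' f.
Proof.
by move=> TT'; apply: ideal_gen_sub => x t y /TT'; apply: ideal_gen_sandwich.
Qed.

Lemma ideal_gen_comm T F G :
  T (comm (wrd F) (wrd G)) -> ideal_gen T (comm (wrd F) (wrd G)).
Proof.
move/(ideal_gen_sandwich [::] [::]); rewrite sandwich_comm_wrd /= !cats0.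
by rewrite comm_wrd.
Qed.

Definition ideal_equiv (T : alg -> Prop) (X Y : word) : Prop :=
  ideal_gen T (alg_sub (wrd X) (wrd Y)).

Section IdealEquiv.
Variable T : alg -> Prop.

Lemma ideal_equiv_refl X : ideal_equiv T X X.
Proof.
by congr ideal_gen: (ideal_gen0 T); apply/funext => w; rewrite /alg_sub subrr.
Qed.

Lemma ideal_equiv_sym X Y : ideal_equiv T X Y -> ideal_equiv T Y X.
Proof.
move/(ideal_genZ (-1)); congr ideal_gen; apply/funext => w.
by rewrite /alg_scale /alg_sub mulN1r opprB.
Qed.

Lemma ideal_equiv_trans X Y Z :
  ideal_equiv T X Y -> ideal_equiv T Y Z -> ideal_equiv T X Z.
Proof.
move=> IXY IYZ; congr ideal_gen: (ideal_genD IXY IYZ); apply/funext => w.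
by rewrite /alg_add /alg_sub addrA subrK.
Qed.

Lemma ideal_equiv_swap x A B y :
  T (comm (wrd A) (wrd B)) -> ideal_equiv T (x ++ A ++ B ++ y) (x ++ B ++ A ++ y).
Proof. by rewrite /ideal_equiv -sandwich_comm_wrd; apply: ideal_gen_sandwich. Qed.

End IdealEquiv.

(** * Classes of words stable under swaps *)

Definition words (n : nat) : seq word := [seq val t | t : n.-tuple bool].

Lemma words_uniq n : uniq (words n).
Proof. by rewrite map_inj_uniq ?enum_uniq //; apply: val_inj. Qed.

Lemma mem_words n w : (w \in words n) = (size w == n).
Proof.
apply/mapP/eqP => [[t _ ->]|w_n]; first exact: size_tuple.
by exists (Tuple (introT eqP w_n)); rewrite ?mem_enum.
Qed.

Definition weight (K : word -> Prop) (n : nat) (f : alg) : C :=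
  \sum_(w <- words n | `[< K w >]) f w.

Lemma weight_wrd K n x : weight K n (wrd x) = ((size x == n) && `[< K x >])%:R.
Proof.
rewrite /weight /wrd; have [/andP[x_n Kx]|nKx] := boolP (_ && _).
  rewrite -big_filter (bigD1_seq x) ?filter_uniq ?words_uniq //=; last first.
    by rewrite mem_filter Kx mem_words.
  by rewrite eqxx (@big1 C 0 +%R) ?addr0 // => w /negbTE->.
rewrite (@big1_seq C 0 +%R) // => w /andP[Kw]; rewrite mem_words => w_n.
by have [wx|//] := eqVneq w x; rewrite -wx w_n Kw in nKx.
Qed.

Section Invariance.
Variables (T : alg -> Prop) (K : word -> Prop) (n : nat).
Hypothesis T_invariant : forall t, T t -> exists F G, t = comm (wrd F) (wrd G) /\
  forall x y, size (x ++ F ++ G ++ y) = n ->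
    K (x ++ F ++ G ++ y) <-> K (x ++ G ++ F ++ y).

Lemma weight_ideal_gen f : ideal_gen T f -> weight K n f = 0.
Proof.
move: f; apply: (ideal_gen_ind (P := fun f => weight K n f = 0))
  => [|f g wf wg|c f wf|x t y /T_invariant[F [G [-> KFG]]]].
- by rewrite /weight (@big1 C 0 +%R).
- by rewrite /weight /alg_add big_split /= -!/(weight K n _) wf wg addr0.
- by rewrite /weight /alg_scale -mulr_sumr -/(weight K n f) wf mulr0.
rewrite sandwich_comm_wrd /weight /alg_sub sumrB -!/(weight K n _) !weight_wrd.
have <- : size (x ++ F ++ G ++ y) = size (x ++ G ++ F ++ y).
  by rewrite !size_cat; lia.
have [size_n|] := eqVneq (size (x ++ F ++ G ++ y)) n; last by rewrite subrr.
by rewrite (asbool_equiv_eq (KFG x y size_n)) subrr.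
Qed.

Lemma ideal_equiv_invariant X Y :
  size X = n -> ideal_equiv T X Y -> K X -> K Y.
Proof.
move=> X_n /weight_ideal_gen; rewrite /weight /alg_sub sumrB -!/(weight K n _).
rewrite !weight_wrd X_n eqxx /= => + /asboolT KX; rewrite KX.
case: asboolP => // _; rewrite andbF subr0 => one_eq0.
by have := oner_neq0 C; rewrite [1]one_eq0 eqxx.
Qed.
End Invariance.

(** * Heights, excursions and primes *)

Lemma size_gt0 (T : eqType) (s : seq T) : (0 < size s)%N = (s != [::]).
Proof. by case: s. Qed.

Lemma cat_neq_nil (T : eqType) (u v : seq T) :
  (u ++ v != [::]) = (u != [::]) || (v != [::]).
Proof. by case: u. Qed.

Lemma cat_eq_split (T : Type) (a b c d : seq T) :
  a ++ b = c ++ d -> (size a <= size c)%N -> exists e, c = a ++ e /\ b = e ++ d.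
Proof.
move=> eq_abcd le_ac; exists (drop (size a) c).
have take_c : take (size a) c = a.
  by rewrite -(takel_cat d le_ac) -eq_abcd take_size_cat.
split; first by rewrite -{1}(cat_take_drop (size a) c) take_c.
have := congr1 (drop (size a)) eq_abcd; rewrite drop_size_cat // drop_cat.
case: ltnP => [//|ge_ac]; have -> : size a = size c by apply/eqP; rewrite eqn_leq le_ac.
by rewrite subnn drop0 drop_size.
Qed.

Definition height (w : word) : int := (count_mem letR w)%:Z - (count_mem letL w)%:Z.

Lemma height_cat u v : height (u ++ v) = height u + height v.
Proof. by rewrite /height !count_cat !PoszD addrACA opprD. Qed.

Lemma balancedE w : balanced w = (height w == 0).
Proof. by rewrite /balanced /height subr_eq0 eqz_nat. Qed.

Lemma height_letter (c : bool) : height [:: c] = if c then 1 else -1.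
Proof. by case: c. Qed.

Lemma elevE W k : elev W k = height (take k W).
Proof. by []. Qed.

Lemma prime_balanced_prefix W e f :
  prime_word W -> W = e ++ f -> e != [::] -> f != [::] -> ~~ balanced e.
Proof.
case=> _ bal_W not_split W_ef e0 f0; apply/negP => bal_e; apply: not_split.
exists e, f; split => //; move: bal_W bal_e; rewrite W_ef !balancedE height_cat.
by move=> /eqP + /eqP e_0; rewrite e_0 add0r => ->.
Qed.

Lemma prime_cat_eq X Y A B : prime_word X -> prime_word Y ->
  A != [::] -> B != [::] -> balanced A -> A ++ B = X ++ Y -> A = X /\ B = Y.
Proof.
move=> pX pY A0 B0 bal_A AB_XY.
have [le_AX|lt_XA] := leqP (size A) (size X).
  have [e [X_Ae B_eY]] := cat_eq_split AB_XY le_AX.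
  have [e0|e0] := eqVneq e [::]; first by move: X_Ae B_eY; rewrite e0 cats0.
  by move: (prime_balanced_prefix pX X_Ae A0 e0); rewrite bal_A.
have [e [A_Xe Y_eB]] := cat_eq_split (esym AB_XY) (ltnW lt_XA).
have e0 : e != [::] by rewrite -size_gt0; move: lt_XA; rewrite A_Xe size_cat /=; lia.
have bal_e : balanced e.
  case: pX => _ + _; move: bal_A; rewrite A_Xe !balancedE height_cat.
  by move=> /eqP + /eqP X_0; rewrite X_0 add0r => ->.
by move: (prime_balanced_prefix pY Y_eB e0 B0); rewrite bal_e.
Qed.

Definition excursion (Pr : pred int) (W : word) : Prop :=
  [/\ W != [::], height W = 0 &
      forall e f, W = e ++ f -> e != [::] -> f != [::] -> Pr (height e)].

Section Excursion.
Variable Pr : pred int.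
Hypothesis Pr0 : ~~ Pr 0.

Lemma excursion_prime W : excursion Pr W -> prime_word W.
Proof.
case=> W0 hW Pr_pre; split => //; first by rewrite balancedE hW.
case=> e [f [e0 f0 + _ W_ef]]; rewrite balancedE => /eqP h_e.
by move: (Pr_pre e f W_ef e0 f0); rewrite h_e (negbTE Pr0).
Qed.

Lemma prime_elevE W :
  (prime_word W /\ forall k, (1 <= k <= (size W).-1)%N -> Pr (elev W k)) <->
  excursion Pr W.
Proof.
split=> [[pW Pr_elev]|xW].
  have [W0 bal_W _] := pW; split=> //; first by apply/eqP; rewrite -balancedE.
  move=> e f W_ef e0 f0; move: (Pr_elev (size e)).
  rewrite elevE W_ef take_size_cat //; apply.
  by move: e0 f0; rewrite -!size_gt0 size_cat /=; lia.
split=> [|k k_bd]; first exact: excursion_prime.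
have [_ _ Pr_pre] := xW; rewrite elevE.
apply: (Pr_pre _ (drop k W)); first by rewrite cat_take_drop.
  by rewrite -size_gt0 size_take_min /=; lia.
by rewrite -size_gt0 size_drop /=; lia.
Qed.

Lemma excursion_shape W : excursion Pr W -> exists c d W',
  [/\ W = c :: W' ++ [:: d], Pr (height [:: c]), Pr (- height [:: d]) &
      height [:: c] + height W' + height [:: d] = 0].
Proof.
case: W => [[]//|c s]; case/lastP: s => [[_ + _]|W' d [_ hW Pr_pre]].
  by case: c.
have W_eq : c :: rcons W' d = [:: c] ++ W' ++ [:: d] by rewrite cats1.
rewrite W_eq !height_cat addrA in hW Pr_pre; exists c, d, W'; split=> //.
- by apply: (Pr_pre [:: c] (W' ++ [:: d])); rewrite ?cat_neq_nil ?orbT.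
- have -> : - height [:: d] = height ([:: c] ++ W').
    by rewrite height_cat -(sub0r (height [:: d])) -hW addrK.
  by apply: (Pr_pre ([:: c] ++ W') [:: d]); rewrite ?catA.
Qed.

Lemma swap_prefix_height a P Q b e f :
  a != [::] -> b != [::] -> balanced P -> balanced Q ->
  a ++ Q ++ P ++ b = e ++ f -> e != [::] -> f != [::] ->
  exists e' f', [/\ a ++ P ++ Q ++ b = e' ++ f', e' != [::], f' != [::] &
                   height e' = height e].
Proof.
rewrite !balancedE => a0 b0 /eqP hP /eqP hQ E e0 f0.
have [le_ea|/ltnW lt_ae] := leqP (size e) (size a).
  have [a2 [a_e _]] := cat_eq_split (esym E) le_ea.
  exists e, (a2 ++ P ++ Q ++ b); split=> //; first by rewrite a_e -catA.
  by rewrite !cat_neq_nil b0 !orbT.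
have [e1 [e_a E1]] := cat_eq_split E lt_ae.
have [le_e1Q|/ltnW lt_Qe1] := leqP (size e1) (size Q).
  have [q2 [Q_e1 _]] := cat_eq_split (esym E1) le_e1Q.
  exists (a ++ P ++ e1), (q2 ++ b); split.
  - by rewrite Q_e1 !catA.
  - by rewrite cat_neq_nil a0.
  - by rewrite cat_neq_nil b0 orbT.
  - by rewrite e_a !height_cat hP add0r.
have [e2 [e1_Q E2]] := cat_eq_split E1 lt_Qe1.
have [le_e2P|/ltnW lt_Pe2] := leqP (size e2) (size P).
  have [p2 [P_e2 _]] := cat_eq_split (esym E2) le_e2P.
  exists (a ++ e2), (p2 ++ Q ++ b); split.
  - by rewrite P_e2 !catA.
  - by rewrite cat_neq_nil a0.
  - by rewrite !cat_neq_nil b0 !orbT.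
  - by rewrite e_a e1_Q !height_cat hQ add0r.
have [e3 [e2_P b_e3]] := cat_eq_split E2 lt_Pe2.
exists (a ++ P ++ Q ++ e3), f; split=> //.
- by rewrite b_e3 !catA.
- by rewrite cat_neq_nil a0.
- by rewrite e_a e1_Q e2_P !height_cat hP hQ !add0r.
Qed.

Lemma excursion_swap a P Q b :
  excursion Pr (a ++ P ++ Q ++ b) -> P != [::] -> Q != [::] ->
  balanced P -> balanced Q -> excursion Pr (a ++ Q ++ P ++ b).
Proof.
move=> xX P0 Q0 bal_P bal_Q; have pX := excursion_prime xX.
have [X0 hX Pr_pre] := xX.
move: (bal_P) (bal_Q); rewrite !balancedE => /eqP hP /eqP hQ.
have a0 : a != [::].
  apply: contraTneq bal_P => a_nil; apply: (prime_balanced_prefix pX (f := Q ++ b)).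
  - by rewrite a_nil.
  - exact: P0.
  - by rewrite cat_neq_nil Q0.
have b0 : b != [::].
  apply/eqP => b_nil.
  apply: (negP (prime_balanced_prefix (e := a) (f := P ++ Q ++ b) pX erefl a0 _)).
    by rewrite cat_neq_nil P0.
  by rewrite balancedE; move: hX; rewrite b_nil !height_cat hP hQ !add0r addr0 => ->.
split=> [||e f E e0 f0]; first by rewrite cat_neq_nil a0.
  by move: hX; rewrite !height_cat hP hQ !add0r.
have [e' [f' [X_e'f' e'0 f'0 <-]]] := swap_prefix_height a0 b0 bal_P bal_Q E e0 f0.
exact: Pr_pre X_e'f' e'0 f'0.
Qed.
End Excursion.

Lemma upper_primeE W : upper_prime W <-> excursion (> 0) W.
Proof. exact: (@prime_elevE (> 0) (negbT (ltxx 0))). Qed.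

Lemma lower_primeE W : lower_prime W <-> excursion (< 0) W.
Proof. exact: (@prime_elevE (< 0) (negbT (ltxx 0))). Qed.

Lemma upper_prime_shape W :
  upper_prime W -> exists2 W', W = letR :: W' ++ [:: letL] & balanced W'.
Proof.
move/upper_primeE/excursion_shape => [c [d [W' [-> + + +]]]].
rewrite /= !height_letter; case: c; case: d => //= _ _ h_W'.
by exists W'; rewrite // balancedE; apply/eqP; lia.
Qed.

Lemma lower_prime_shape W :
  lower_prime W -> exists2 W', W = letL :: W' ++ [:: letR] & balanced W'.
Proof.
move/lower_primeE/excursion_shape => [c [d [W' [-> + + +]]]].
rewrite /= !height_letter; case: c; case: d => //= _ _ h_W'.
by exists W'; rewrite // balancedE; apply/eqP; lia.
Qed.

Lemma upper_lower_disjoint W : upper_prime W -> lower_prime W -> False.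
Proof.
case=> [[W0 bal_W _] up] [_ low].
have k1 : (1 <= 1 <= (size W).-1)%N.
  by case: W W0 bal_W {up low} => [|c [|d w]] //; case: c.
by have := up 1 k1; have := low 1 k1; lia.
Qed.

Lemma prime_prefix_height W k :
  prime_word W -> (0 < k < size W)%N -> height (take k W) != 0.
Proof.
move=> pW k_bd; rewrite -balancedE.
apply: (prime_balanced_prefix pW (esym (cat_take_drop k W))).
  by rewrite -size_gt0 size_take_min /=; lia.
by rewrite -size_gt0 size_drop /=; lia.
Qed.

Lemma prime_prefix_sign W k : prime_word W -> (0 < k < size W)%N ->
  (0 < height (take k W)) = (0 < height (take 1 W)).
Proof.
move=> pW; elim: k => [//|k IHk] k_bd.
have [->//|k0] := posnP k.
have k_bd' : (0 < k < size W)%N by lia.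
rewrite -(IHk k_bd') (take_nth letL (_ : k < size W)%N) /=; last by lia.
have := prime_prefix_height pW k_bd; have := prime_prefix_height pW k_bd'.
rewrite (take_nth letL (_ : k < size W)%N) /=; last by lia.
by rewrite -cats1 height_cat height_letter; case: nth; lia.
Qed.

Lemma prime_upper_or_lower W : prime_word W -> upper_prime W \/ lower_prime W.
Proof.
move=> pW; have [pos1|npos1] := boolP (0 < height (take 1 W)); [left|right];
  split=> // k k_bd; have k_bd' : (0 < k < size W)%N by lia.
  by rewrite elevE (prime_prefix_sign pW k_bd').
have := prime_prefix_height pW k_bd'; move: npos1.
by rewrite elevE -(prime_prefix_sign pW k_bd'); lia.
Qed.

Lemma upper_lower_infix X Y u m v :
  upper_prime X -> lower_prime Y -> X ++ Y = u ++ m ++ v -> balanced m ->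
  (size u < size X < size u + size m)%N -> u = [::] /\ v = [::].
Proof.
move=> /upper_primeE[_ hX pre_X] /lower_primeE[_ hY pre_Y] E.
rewrite balancedE => /eqP h_m /andP[lt_uX lt_Xum].
have [e [X_ue me_v]] := cat_eq_split (esym E) (ltnW lt_uX).
have size_X : size X = (size u + size e)%N by rewrite X_ue size_cat.
have [g [m_eg Y_gv]] : exists g, m = e ++ g /\ Y = g ++ v.
  by apply: cat_eq_split (esym me_v) _; move: lt_Xum; rewrite size_X /=; lia.
have e0 : e != [::] by rewrite -size_gt0; move: lt_uX; rewrite size_X /=; lia.
have g0 : g != [::].
  by rewrite -size_gt0; move: lt_Xum; rewrite size_X m_eg size_cat /=; lia.
have h_ue : height u + height e = 0 by rewrite -height_cat -X_ue.
have h_eg : height e + height g = 0 by rewrite -height_cat -m_eg.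
have [u_nil|u0] := eqVneq u [::]; have [v_nil|v0] := eqVneq v [::] => //; exfalso.
- have /= := pre_Y g v Y_gv g0 v0.
  by move: h_ue; rewrite u_nil (_ : height [::] = 0) //; lia.
- by have /= := pre_X u e X_ue u0 e0; move: hY; rewrite Y_gv v_nil cats0; lia.
- by have /= := pre_X u e X_ue u0 e0; have /= := pre_Y g v Y_gv g0 v0; lia.
Qed.

(** * Generation *)

Inductive swap_equiv (M : word -> word -> Prop) : word -> word -> Prop :=
  | swap_refl X : swap_equiv M X X
  | swap_step x A B y : M A B -> swap_equiv M (x ++ A ++ B ++ y) (x ++ B ++ A ++ y)
  | swap_sym X Y : swap_equiv M X Y -> swap_equiv M Y X
  | swap_trans X Y Z : swap_equiv M X Y -> swap_equiv M Y Z -> swap_equiv M X Z.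

Section SwapEquiv.
Variable M : word -> word -> Prop.

Lemma swap_equiv_infix x y X Y :
  swap_equiv M X Y -> swap_equiv M (x ++ X ++ y) (x ++ Y ++ y).
Proof.
elim=> {X Y} [X|u A B v MAB|X Y _ IH|X Y Z _ IHXY _ IHYZ].
- exact: swap_refl.
- by have := swap_step (x ++ u) (v ++ y) MAB; rewrite -!catA.
- exact: swap_sym.
- exact: swap_trans IHXY IHYZ.
Qed.

Lemma swap_equiv_catl C X Y : swap_equiv M X Y -> swap_equiv M (C ++ X) (C ++ Y).
Proof. by move/(swap_equiv_infix C [::]); rewrite !cats0. Qed.

Lemma swap_equiv_catr C X Y : swap_equiv M X Y -> swap_equiv M (X ++ C) (Y ++ C).
Proof. exact: (swap_equiv_infix [::] C). Qed.

Lemma swap_equiv_ideal T X Y :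
  (forall A B, M A B -> T (comm (wrd A) (wrd B))) ->
  swap_equiv M X Y -> ideal_equiv T X Y.
Proof.
move=> M_T; elim=> {X Y} [X|x A B y /M_T|X Y _|X Y Z _ IHXY _].
- exact: ideal_equiv_refl.
- exact: ideal_equiv_swap.
- exact: ideal_equiv_sym.
- exact: ideal_equiv_trans.
Qed.

Definition commute_below (n : nat) : Prop :=
  forall A B, balanced A -> balanced B -> (size A + size B < n)%N ->
    swap_equiv M (A ++ B) (B ++ A).

Lemma commute_below_le m n : (m <= n)%N -> commute_below n -> commute_below m.
Proof. by move=> le_mn IH A B bA bB lt_m; apply: IH => //; apply: leq_trans le_mn. Qed.

Lemma swap_equiv_of_wequiv X Y :
  commute_below (size X).+1 -> wequiv X Y -> swap_equiv M X Y.
Proof.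
move=> IH XY; apply: (ideal_equiv_invariant _ erefl XY (swap_refl M X)).
move=> _ [F [G [_ _ bF bG ->]]]; exists F, G; split=> // x y size_X.
have FG : swap_equiv M (x ++ F ++ G ++ y) (x ++ G ++ F ++ y).
  have := swap_equiv_infix x y (IH F G bF bG _); rewrite -!catA; apply.
  by rewrite -size_X !size_cat /=; lia.
by split=> XZ; [exact: swap_trans XZ FG | exact: swap_trans XZ (swap_sym FG)].
Qed.

Lemma commute_cat F1 F2 G :
  swap_equiv M (F1 ++ G) (G ++ F1) -> swap_equiv M (F2 ++ G) (G ++ F2) ->
  swap_equiv M ((F1 ++ F2) ++ G) (G ++ F1 ++ F2).
Proof.
move=> F1G F2G; rewrite -catA; apply: swap_trans (swap_equiv_catl F1 F2G) _.
by rewrite !catA; apply: swap_equiv_catr.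
Qed.

Lemma commute_same_shape c F' G' : balanced F' -> balanced G' ->
  commute_below (size F' + size G' + 4) ->
  swap_equiv M ((c :: F' ++ [:: ~~ c]) ++ (c :: G' ++ [:: ~~ c]))
               ((c :: G' ++ [:: ~~ c]) ++ (c :: F' ++ [:: ~~ c])).
Proof.
(* With c' := ~~ c and N := c' c balanced, (c F' c') (c G' c') = c (F' N) G' c'. *)
move=> bF bG IH; have bN : balanced [:: ~~ c; c] by case: c.
set N := [:: ~~ c; c] in bN *.
have pull A B : balanced A -> balanced B -> (size A + size B = size F' + size G')%N ->
    swap_equiv M ((c :: A ++ [:: ~~ c]) ++ (c :: B ++ [:: ~~ c]))
                 ([:: c] ++ N ++ (A ++ B) ++ [:: ~~ c]).
  move=> bA bB size_AB.
  have := swap_equiv_infix [:: c] (B ++ [:: ~~ c]) (IH A N bA bN _).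
  by rewrite /= -!catA /=; apply; move: size_AB; rewrite /N /=; lia.
apply: swap_trans (pull F' G' bF bG erefl) _.
apply: swap_trans _ (swap_sym (pull G' F' bG bF (addnC _ _))).
have := swap_equiv_infix ([:: c] ++ N) [:: ~~ c] (IH F' G' bF bG _).
by rewrite -!catA; apply; lia.
Qed.

End SwapEquiv.

Lemma prime_or_split A : A != [::] -> balanced A ->
  prime_word A \/ exists A1 A2,
    [/\ A1 != [::], A2 != [::], balanced A1, balanced A2 & A = A1 ++ A2].
Proof.
move=> A0 bA; have [split_A|no_split] := EM (exists A1 A2,
  [/\ A1 != [::], A2 != [::], balanced A1, balanced A2 & A = A1 ++ A2]).
  by right.
by left.
Qed.

Lemma S3_sub_S U D :
  rep_choice upper_prime U -> rep_choice lower_prime D ->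
  forall x, S3 U D x -> S_set x.
Proof.
move=> [HU _] [HD _] _ [P [Q [uP lQ ->]]].
have [[[UP0 bUP _] _] _] := HU P uP; have [[[DQ0 bDQ _] _] _] := HD Q lQ.
by exists (U P), (D Q).
Qed.

Definition rep_pair (U D : word -> word) (A B : word) : Prop :=
  exists P Q, [/\ upper_prime P, lower_prime Q, A = U P & B = D Q].

Section Generation.
Variables U D : word -> word.
Hypotheses (HU : rep_choice upper_prime U) (HD : rep_choice lower_prime D).
Local Notation equiv := (swap_equiv (rep_pair U D)).

Lemma commute_upper_lower F G : upper_prime F -> lower_prime G ->
  commute_below (rep_pair U D) (size F + size G) -> equiv (F ++ G) (G ++ F).
Proof.
move=> uF lG IH.
have [[F0 _ _] _] := uF; have [[G0 _ _] _] := lG.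
have FU : equiv F (U F).
  apply: swap_equiv_of_wequiv; last exact/ideal_equiv_sym/(HU.1 F uF).2.
  by apply: commute_below_le IH; move: G0; rewrite -size_gt0 /=; lia.
have GD : equiv G (D G).
  apply: swap_equiv_of_wequiv; last exact/ideal_equiv_sym/(HD.1 G lG).2.
  by apply: commute_below_le IH; move: F0; rewrite -size_gt0 /=; lia.
have UD : equiv (U F ++ D G) (D G ++ U F).
  have := swap_step [::] [::] (_ : rep_pair U D (U F) (D G)).
  by rewrite /= !cats0; apply; exists F, G.
apply: swap_trans (swap_equiv_catr G FU) _.
apply: swap_trans (swap_equiv_catl (U F) GD) _.
apply: swap_trans UD _; apply: swap_trans (swap_equiv_catr (U F) (swap_sym GD)) _.
exact: swap_equiv_catl (swap_sym FU).
Qed.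

Lemma commute_primes F G : prime_word F -> prime_word G ->
  commute_below (rep_pair U D) (size F + size G) -> equiv (F ++ G) (G ++ F).
Proof.
move=> /prime_upper_or_lower[uF|lF] /prime_upper_or_lower[uG|lG] IH.
- have [F' eF bF'] := upper_prime_shape uF; have [G' eG bG'] := upper_prime_shape uG.
  subst F G.
  apply: commute_same_shape => //; apply: commute_below_le IH.
  by rewrite /= !size_cat /=; lia.
- exact: commute_upper_lower.
- by apply: swap_sym; apply: commute_upper_lower; rewrite // addnC.
- have [F' eF bF'] := lower_prime_shape lF; have [G' eG bG'] := lower_prime_shape lG.
  subst F G.
  apply: commute_same_shape => //; apply: commute_below_le IH.
  by rewrite /= !size_cat /=; lia.
Qed.

Lemma commute_balanced n : commute_below (rep_pair U D) n.
Proof.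
elim: n => [//|n IHn] A B bA bB.
rewrite ltnS leq_eqVlt => /orP[/eqP size_AB|]; last exact: IHn.
have [->|A0] := eqVneq A [::]; first by rewrite cats0; apply: swap_refl.
have [->|B0] := eqVneq B [::]; first by rewrite cats0; apply: swap_refl.
have IH : commute_below (rep_pair U D) (size A + size B) by rewrite size_AB.
case: (prime_or_split A0 bA) => [pA|[A1 [A2 [A10 A20 bA1 bA2 eA]]]]; last first.
  subst A; apply: commute_cat; apply: IH => //;
    by move: A10 A20 B0; rewrite -!size_gt0 size_cat /=; lia.
case: (prime_or_split B0 bB) => [pB|[B1 [B2 [B10 B20 bB1 bB2 eB]]]]; last first.
  subst B; apply: swap_sym; apply: commute_cat; apply: IH => //;
    by move: B10 B20 A0; rewrite -!size_gt0 size_cat /=; lia.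
exact: commute_primes.
Qed.

Lemma ideal_gen_S3 f : ideal_gen (S3 U D) f <-> J f.
Proof.
split; first exact/ideal_gen_mono/(S3_sub_S HU HD).
apply: ideal_gen_sub => x _ y [F [G [_ _ bF bG ->]]].
rewrite sandwich_comm_wrd -/(ideal_equiv _ _ _).
apply: (swap_equiv_ideal (M := rep_pair U D)) => [A B [P [Q [uP lQ -> ->]]]|].
  by exists P, Q.
have := swap_equiv_infix x y (@commute_balanced _ F G bF bG (ltnSn _)).
by rewrite -!catA.
Qed.

End Generation.

(** * Minimality *)

Definition split_class (X0 Y0 W : word) : Prop :=
  exists X Y, [/\ W = X ++ Y, upper_prime X, lower_prime Y, wequiv X X0 & wequiv Y Y0].

Section SplitClass.
Variables X0 Y0 : word.

Lemma split_class_swap x A B y :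
  A != [::] -> B != [::] -> balanced A -> balanced B ->
  ~ [/\ upper_prime A, lower_prime B, wequiv A X0 & wequiv B Y0] ->
  split_class X0 Y0 (x ++ A ++ B ++ y) -> split_class X0 Y0 (x ++ B ++ A ++ y).
Proof.
move=> A0 B0 bA bB not_AB [X [Y [E uX lY XX0 YY0]]].
have swap_S a b : wequiv (a ++ B ++ A ++ b) (a ++ A ++ B ++ b).
  by apply: ideal_equiv_swap; exists B, A.
have [inX|outX] := leqP (size (x ++ A ++ B)) (size X).
  have E' : (x ++ A ++ B) ++ y = X ++ Y by rewrite -!catA.
  have [e [X_e y_e]] := cat_eq_split E' inX.
  rewrite -!catA in X_e; exists (x ++ B ++ A ++ e), Y; split=> //.
  - by rewrite y_e -!catA.
  - apply/upper_primeE; apply: (@excursion_swap (> 0) (negbT (ltxx 0))) => //.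
    by rewrite -X_e; apply/upper_primeE.
  - by apply: ideal_equiv_trans (swap_S x e) _; rewrite -X_e.
have [inY|outY] := leqP (size X) (size x).
  have [e [x_e Y_e]] := cat_eq_split (esym E) inY.
  exists X, (e ++ B ++ A ++ y); split=> //.
  - by rewrite x_e -!catA.
  - apply/lower_primeE; apply: (@excursion_swap (< 0) (negbT (ltxx 0))) => //.
    by rewrite -Y_e; apply/lower_primeE.
  - by apply: ideal_equiv_trans (swap_S e y) _; rewrite -Y_e.
have bAB : balanced (A ++ B).
  by move: bA bB; rewrite !balancedE height_cat => /eqP-> /eqP->.
have [x_nil y_nil] : x = [::] /\ y = [::].
  apply: (upper_lower_infix uX lY (_ : X ++ Y = x ++ (A ++ B) ++ y) bAB).
    by rewrite -catA E.
  by rewrite outY; move: outX; rewrite !size_cat.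
move: E; rewrite x_nil y_nil cats0 /= => E.
have [AX BY] := prime_cat_eq uX.1 lY.1 A0 B0 bA E.
by case: not_AB; rewrite AX BY.
Qed.

Lemma lower_cat_not_split B A :
  lower_prime B -> A != [::] -> ~ split_class X0 Y0 (B ++ A).
Proof.
move=> lB A0 [X [Y [E uX lY _ _]]]; have [[B0 bB _] _] := lB.
have [BX _] := prime_cat_eq uX.1 lY.1 B0 A0 bB E.
by apply: (upper_lower_disjoint (W := B)); rewrite // BX.
Qed.

End SplitClass.

Lemma rep_choice_eq (isp : word -> Prop) U P P0 :
  rep_choice isp U -> isp P -> isp P0 -> wequiv (U P) (U P0) -> U P = U P0.
Proof.
move=> [rep_equiv rep_eq] iP iP0 UP_UP0; apply: rep_eq => //.
apply: ideal_equiv_trans (ideal_equiv_sym (rep_equiv P iP).2) _.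
exact: ideal_equiv_trans UP_UP0 (rep_equiv P0 iP0).2.
Qed.

Lemma S3_minimal U D T :
  rep_choice upper_prime U -> rep_choice lower_prime D ->
  (forall x, T x -> S3 U D x) -> (exists x, S3 U D x /\ ~ T x) ->
  ~ (forall f, ideal_gen T f <-> J f).
Proof.
move=> HU HD T_S3 [_ [[P0 [Q0 [uP0 lQ0 ->]]] notT0]] T_J.
have [uX0 _] := HU.1 P0 uP0; have [lY0 _] := HD.1 Q0 lQ0.
have [[X00 _ _] _] := uX0.
have T_X0Y0 : ideal_equiv T (U P0 ++ D Q0) (D Q0 ++ U P0).
  rewrite /ideal_equiv -comm_wrd; apply/T_J/ideal_gen_comm.
  by apply: (S3_sub_S HU HD); exists P0, Q0.
apply: (lower_cat_not_split (X0 := U P0) (Y0 := D Q0) lY0 X00).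
apply: (ideal_equiv_invariant _ erefl T_X0Y0); last first.
  by exists (U P0), (D Q0); split=> //; apply: ideal_equiv_refl.
move=> t Tt; have [P [Q [uP lQ t_eq]]] := T_S3 t Tt.
exists (U P), (D Q); split=> // x y _.
have [uUP _] := HU.1 P uP; have [lDQ _] := HD.1 Q lQ.
have [[UP0 bUP _] _] := uUP; have [[DQ0 bDQ _] _] := lDQ.
split; apply: split_class_swap => //.
  case=> _ _ UP_X0 DQ_Y0; apply: notT0.
  by rewrite -(rep_choice_eq HU uP uP0 UP_X0) -(rep_choice_eq HD lQ lQ0 DQ_Y0) -t_eq.
by case=> uDQ; case: (upper_lower_disjoint uDQ lDQ).
Qed.

Theorem theorem5p8 (U D : word -> word) :
  rep_choice upper_prime U -> rep_choice lower_prime D ->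
  [/\ (forall x, S3 U D x -> S_set x),
      (forall f, ideal_gen (S3 U D) f <-> J f) &
      (forall T : alg -> Prop,
          (forall x, T x -> S3 U D x) -> (exists x, S3 U D x /\ ~ T x) ->
          ~ (forall f, ideal_gen T f <-> J f))].
Proof.
move=> HU HD; split; [exact: S3_sub_S | exact: ideal_gen_S3 | move=> T].
exact: S3_minimal.
Qed.
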